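(* Let $T_b, T_r, S, T_u : \mathbb{N}_{\geq 1} \to \mathbb{R}_{>0}$ satisfy $T_r(n) = T_b(n) + T_r(n-1)$ and $T_u(n) = S(n) + T_u(\lfloor n/2 \rfloor)$ for $n \geq 2$, where $T_b$ and $S$ are each $\Theta(n^{a}(\log n)^{b})$ for some non-negative integers $a,b$. Then $T_u(n)/T_r(n) \to 0$ (super-linear speedup, i.e. $\Theta(T_u) \subsetneq \Theta(T_r)$) if and only if $S(n)/(n\, T_b(n)) \to 0$ (i.e. $\Theta(S) \subsetneq \Theta(n \, T_b)$).
   Context: $T_b(n)$ models the time of the $n$-th recursive step of an original linear recursion, $T_r(n)$ the time of the original recursion with recursion depth $n$, $S(n)=T_c(n)+T_d(n)$ the time of a combined recursive step of the unfolder and meta-interpreter in runtime repeated recursion unfolding, and $T_u(n)$ the total time of runtime repeated recursion unfolding for recursion depth $n$. Asymptotic notation is as $n\to\infty$. *)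

From Stdlib Require Import Reals Lra Lia.
From Coquelicot Require Import Coquelicot.
Open Scope R_scope.

Definition bigTheta (f g : nat -> R) : Prop :=
  exists (c1 c2 : R) (N : nat), 0 < c1 /\ 0 < c2 /\
    forall n : nat, (N <= n)%nat -> c1 * g n <= f n /\ f n <= c2 * g n.

Definition polylog (a b : nat) (n : nat) : R := INR n ^ a * ln (INR n) ^ b.

From Stdlib Require Import Reals.
From Coquelicot Require Import Coquelicot.
Open Scope R_scope.
From Stdlib Require Import Arith Lra Lia Psatz.

(* Write p(n) = n^a (log n)^b.  The proof rests on three general facts.
   1. Linear recursion: if Tr(n) = Tb(n) + Tr(n-1) and Tb = Theta(p), where
      p is nondecreasing, eventually >= 1 and "doubling" (p(n) <= D p(n/2+1)),
      then Tr = Theta(n p(n)): summing Tb over [m, n] bounds Tr from above by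
      (n - m) p(n), and from below, over the upper half [n/2, n], by
      (n/2) p(n/2+1) >= (n/2) p(n)/D.
   2. Halving recursion: if Tu(n) = S(n) + Tu(n/2) and S(n)/(n G(n)) -> 0 for
      an eventually positive nondecreasing G, then Tu(n)/(n G(n)) -> 0,
      because the geometric sum n + n/2 + n/4 + ... is at most 2n.
   3. A ratio s/x tends to 0 as soon as 0 <= s <= t and y <= K x eventually,
      for some ratio t/y tending to 0.
   The theorem follows: Tr, n Tb and n p are pairwise Theta of each other.
   "=>": S <= Tu, so S/(n Tb) is dominated by Tu/Tr.
   "<=": S/(n Tb) -> 0 gives S/(n p) -> 0, hence Tu/(n p) -> 0 by fact 2,
   and Tu/Tr is dominated by Tu/(n p). *)

Lemma bigTheta_sym (f g : nat -> R) : bigTheta f g -> bigTheta g f.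
Proof.
  intros (c1 & c2 & N & hc1 & hc2 & hfg).
  exists (/ c2), (/ c1), N; split; [now apply Rinv_0_lt_compat|].
  split; [now apply Rinv_0_lt_compat|].
  intros n Hn; destruct (hfg n Hn) as [Hl Hu]; split.
  - apply (Rmult_le_reg_l c2); [lra|]. rewrite <- Rmult_assoc, Rinv_r; lra.
  - apply (Rmult_le_reg_l c1); [lra|]. rewrite <- Rmult_assoc, Rinv_r; lra.
Qed.

Lemma bigTheta_trans (f g h : nat -> R) :
  bigTheta f g -> bigTheta g h -> bigTheta f h.
Proof.
  intros (c1 & c2 & N & hc1 & hc2 & hfg) (d1 & d2 & M & hd1 & hd2 & hgh).
  exists (c1 * d1), (c2 * d2), (Nat.max N M).
  split; [nra|]; split; [nra|].
  intros n Hn; destruct (hfg n ltac:(lia)), (hgh n ltac:(lia)); split; nra.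
Qed.

Lemma bigTheta_mul (h f g : nat -> R) :
  (forall n, 0 <= h n) -> bigTheta f g ->
  bigTheta (fun n => h n * f n) (fun n => h n * g n).
Proof.
  intros Hh (c1 & c2 & N & hc1 & hc2 & hfg).
  exists c1, c2, N; split; [lra|]; split; [lra|].
  intros n Hn; destruct (hfg n Hn); pose proof (Hh n); split; nra.
Qed.

Lemma bigTheta_upper (f g : nat -> R) :
  bigTheta f g -> exists K N, forall n, (N <= n)%nat -> f n <= K * g n.
Proof.
  intros (c1 & c2 & N & _ & _ & hfg).
  exists c2, N; intros n Hn; apply (hfg n Hn).
Qed.

Lemma ratio_le (s t x y K : R) :
  0 < x -> 0 < y -> 0 <= s <= t -> y <= K * x -> s / x <= K * (t / y).
Proof.
  intros Hx Hy Hst HyK.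
  apply Rle_trans with (t / x).
  - apply Rmult_le_compat_r; [apply Rlt_le, Rinv_0_lt_compat|]; lra.
  - unfold Rdiv. apply (Rmult_le_reg_r (x * y)); [nra|].
    replace (t * / x * (x * y)) with (t * y) by (field; lra).
    replace (K * (t * / y) * (x * y)) with (t * (K * x)) by (field; lra).
    apply Rmult_le_compat_l; lra.
Qed.

Lemma lim0_ratio_compare (s t x y : nat -> R) :
  (exists K N, forall n, (N <= n)%nat -> y n <= K * x n) ->
  (exists N, forall n, (N <= n)%nat -> 0 < x n /\ 0 < y n /\ 0 <= s n <= t n) ->
  is_lim_seq (fun n => t n / y n) 0 -> is_lim_seq (fun n => s n / x n) 0.
Proof.
  intros (K & N1 & HK) (N2 & Hpos) Hlim.
  assert (HKlim := is_lim_seq_scal_l _ K 0 Hlim); simpl in HKlim.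
  rewrite Rmult_0_r in HKlim.
  apply (is_lim_seq_le_le_loc (fun _ => 0) _ (fun n => K * (t n / y n)));
    [| apply is_lim_seq_const | exact HKlim].
  exists (Nat.max N1 N2); intros n Hn.
  destruct (Hpos n ltac:(lia)) as (Hx & Hy & Hst).
  split.
  - apply Rmult_le_pos; [lra | now apply Rlt_le, Rinv_0_lt_compat].
  - apply ratio_le; auto; apply HK; lia.
Qed.

Lemma prefix_upper_bound (f : nat -> R) (L : nat) :
  exists A, 0 <= A /\ forall m, (m < L)%nat -> f m <= A.
Proof.
  induction L as [|L [A [HA0 HA]]].
  - exists 0; split; [lra | intros; lia].
  - exists (Rmax A (f L)); split.
    + apply Rle_trans with A; [lra | apply Rmax_l].
    + intros m Hm; destruct (Nat.eq_dec m L) as [->|].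
      * apply Rmax_r.
      * apply Rle_trans with A; [apply HA; lia | apply Rmax_l].
Qed.

Lemma half_bounds (n : nat) :
  2 * INR (n / 2) <= INR n /\ INR n <= 2 * INR (n / 2) + 1.
Proof.
  pose proof (Nat.div_mod_eq n 2); pose proof (Nat.mod_upper_bound n 2).
  change 2 with (INR 2); rewrite <- mult_INR.
  replace (INR (2 * (n / 2)) + 1) with (INR (2 * (n / 2) + 1))
    by (rewrite plus_INR; simpl; lra).
  split; apply le_INR; lia.
Qed.

Section LinearRecursion.

Variables Tb Tr : nat -> R.
Hypothesis Tr_nonneg : forall n, (1 <= n)%nat -> 0 <= Tr n.
Hypothesis Tr_rec : forall n, (2 <= n)%nat -> Tr n = Tb n + Tr (n - 1)%nat.

Lemma linear_rec_increment_upper (m j : nat) (B : R) : (1 <= m)%nat ->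
  (forall k, (m < k <= m + j)%nat -> Tb k <= B) -> Tr (m + j)%nat <= Tr m + INR j * B.
Proof.
  intros Hm; induction j as [|j IH]; intros HB.
  - rewrite Nat.add_0_r; simpl; lra.
  - rewrite (Tr_rec (m + S j)) by lia; replace (m + S j - 1)%nat with (m + j)%nat by lia.
    rewrite S_INR; pose proof (HB (m + S j)%nat ltac:(lia)).
    assert (Tr (m + j)%nat <= Tr m + INR j * B) by (apply IH; intros; apply HB; lia).
    lra.
Qed.

Lemma linear_rec_increment_lower (m j : nat) (B : R) : (1 <= m)%nat ->
  (forall k, (m < k <= m + j)%nat -> B <= Tb k) -> Tr m + INR j * B <= Tr (m + j)%nat.
Proof.
  intros Hm; induction j as [|j IH]; intros HB.
  - rewrite Nat.add_0_r; simpl; lra.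
  - rewrite (Tr_rec (m + S j)) by lia; replace (m + S j - 1)%nat with (m + j)%nat by lia.
    rewrite S_INR; pose proof (HB (m + S j)%nat ltac:(lia)).
    assert (Tr m + INR j * B <= Tr (m + j)%nat) by (apply IH; intros; apply HB; lia).
    lra.
Qed.

Variable p : nat -> R.
Variables (N0 : nat) (D : R).
Hypothesis p_mono : forall m n, (1 <= m <= n)%nat -> p m <= p n.
Hypothesis p_ge1 : forall n, (N0 <= n)%nat -> 1 <= p n.
Hypothesis D_pos : 0 < D.
Hypothesis p_doubling : forall n, (1 <= n)%nat -> p n <= D * p (n / 2 + 1)%nat.
Hypothesis Tb_theta : bigTheta Tb p.

(* Tr(n) <= Tr(m0) + n c2 p(n), and Tr(m0) is absorbed since n p(n) >= 1. *)
Lemma linear_rec_upper :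
  exists K N, 0 < K /\ forall n, (N <= n)%nat -> Tr n <= K * (INR n * p n).
Proof.
  destruct Tb_theta as (c1 & c2 & N & _ & hc2 & hb).
  set (m0 := Nat.max N 1).
  exists (Tr m0 + c2), (Nat.max m0 (Nat.max N0 1)).
  pose proof (Tr_nonneg m0 ltac:(lia)).
  split; [lra|]; intros n Hn.
  assert (Hinc := linear_rec_increment_upper m0 (n - m0) (c2 * p n) ltac:(lia)).
  replace (m0 + (n - m0))%nat with n in Hinc by lia.
  assert (HTr : Tr n <= Tr m0 + INR (n - m0) * (c2 * p n)).
  { apply Hinc; intros k Hk. apply Rle_trans with (c2 * p k).
    - apply hb; lia.
    - apply Rmult_le_compat_l; [lra | apply p_mono; lia]. }
  pose proof (p_ge1 n ltac:(lia)).
  assert (1 <= INR n) by (apply (le_INR 1); lia).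
  assert (INR (n - m0) <= INR n) by (apply le_INR; lia).
  pose proof (pos_INR (n - m0)).
  assert (1 <= INR n * p n) by nra.
  assert (Tr m0 <= Tr m0 * (INR n * p n)) by nra.
  assert (INR (n - m0) * (c2 * p n) <= INR n * (c2 * p n))
    by (apply Rmult_le_compat_r; nra).
  lra.
Qed.

(* Over the upper half [n/2, n], Tr grows by at least (n/2) c1 p(n/2+1),
   which is at least (n/2) c1 p(n)/D by the doubling property. *)
Lemma linear_rec_lower :
  exists K N, 0 < K /\ forall n, (N <= n)%nat -> K * (INR n * p n) <= Tr n.
Proof.
  destruct Tb_theta as (c1 & c2 & N & hc1 & _ & hb).
  set (m0 := Nat.max N 1).
  exists (c1 / (2 * D)), (Nat.max (2 * m0 + 2) N0).
  split; [apply Rdiv_lt_0_compat; lra|]; intros n Hn.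
  set (h := (n / 2)%nat).
  assert (Hh : (m0 <= h /\ h < n)%nat).
  { pose proof (Nat.div_mod_eq n 2); pose proof (Nat.mod_upper_bound n 2); lia. }
  assert (Hinc := linear_rec_increment_lower h (n - h) (c1 * p (h + 1)%nat) ltac:(lia)).
  replace (h + (n - h))%nat with n in Hinc by lia.
  assert (HTr : Tr h + INR (n - h) * (c1 * p (h + 1)%nat) <= Tr n).
  { apply Hinc; intros k Hk. apply Rle_trans with (c1 * p k).
    - apply Rmult_le_compat_l; [lra | apply p_mono; lia].
    - apply hb; lia. }
  pose proof (Tr_nonneg h ltac:(lia)).
  pose proof (p_ge1 n ltac:(lia)).
  pose proof (p_doubling n ltac:(lia)) as Hdoub; fold h in Hdoub.
  assert (Hhalf : INR n <= 2 * INR (n - h)).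
  { rewrite minus_INR by lia; pose proof (half_bounds n) as Hb; fold h in Hb; lra. }
  pose proof (pos_INR n).
  assert (Hp : p n / D <= p (h + 1)%nat).
  { apply (Rmult_le_reg_l D); [lra|].
    replace (D * (p n / D)) with (p n) by (field; lra); lra. }
  assert (0 < p n / D) by (apply Rdiv_lt_0_compat; lra).
  replace (c1 / (2 * D) * (INR n * p n)) with (INR n / 2 * (c1 * (p n / D)))
    by (field; lra).
  assert (INR n / 2 * (c1 * (p n / D)) <= INR (n - h) * (c1 * p (h + 1)%nat)).
  { apply Rmult_le_compat; [lra | apply Rmult_le_pos; lra | lra |].
    apply Rmult_le_compat_l; lra. }
  lra.
Qed.

Lemma linear_recursion_theta : bigTheta Tr (fun n => INR n * p n).
Proof.
  destruct linear_rec_upper as (K1 & N1 & hK1 & hup).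
  destruct linear_rec_lower as (K2 & N2 & hK2 & hlow).
  exists K2, K1, (Nat.max N1 N2); split; [lra|]; split; [lra|].
  intros n Hn; split; [apply hlow | apply hup]; lia.
Qed.

End LinearRecursion.

Section HalvingRecursion.

Variables S Tu G : nat -> R.
Hypothesis Tu_rec : forall n, (2 <= n)%nat -> Tu n = S n + Tu (n / 2)%nat.

(* From M on, S(m) <= eps m G(m); then Tu(n) <= A + 2 eps n G(n), where A
   bounds Tu below 2M: each halving step adds at most half the previous bound. *)
Lemma halving_rec_bound (eps A : R) (M : nat) :
  (1 <= M)%nat -> 0 <= eps ->
  (forall m, (M <= m)%nat -> 0 <= G m) ->
  (forall m n, (M <= m <= n)%nat -> G m <= G n) ->
  (forall m, (M <= m)%nat -> S m <= eps * (INR m * G m)) ->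
  (forall m, (m < 2 * M)%nat -> Tu m <= A) ->
  forall n, (M <= n)%nat -> Tu n <= A + 2 * eps * (INR n * G n).
Proof.
  intros HM Heps HG0 HGmono HS HA n.
  induction n as [n IH] using lt_wf_ind; intros Hn.
  pose proof (pos_INR n); pose proof (HG0 n Hn).
  assert (0 <= 2 * eps * (INR n * G n)) by (apply Rmult_le_pos; nra).
  destruct (Nat.lt_ge_cases n (2 * M)) as [Hsmall | Hlarge].
  - pose proof (HA n Hsmall); lra.
  - assert (Hh : (M <= n / 2 < n)%nat).
    { pose proof (Nat.div_mod_eq n 2); pose proof (Nat.mod_upper_bound n 2); lia. }
    rewrite Tu_rec by lia.
    pose proof (IH (n / 2)%nat ltac:(lia) ltac:(lia)).
    pose proof (HS n Hn); pose proof (half_bounds n) as [Hhalf _].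
    pose proof (HG0 (n / 2)%nat ltac:(lia)).
    pose proof (HGmono (n / 2)%nat n ltac:(lia)).
    assert (2 * INR (n / 2) * G (n / 2)%nat <= INR n * G n).
    { apply Rle_trans with (INR n * G (n / 2)%nat);
        [apply Rmult_le_compat_r | apply Rmult_le_compat_l]; lra. }
    nra.
Qed.

Lemma halving_recursion_negligible (N : nat) :
  (forall n, (1 <= n)%nat -> 0 <= Tu n) ->
  (forall n, (N <= n)%nat -> 0 < G n) ->
  (forall m n, (N <= m <= n)%nat -> G m <= G n) ->
  is_lim_seq (fun n => S n / (INR n * G n)) 0 ->
  is_lim_seq (fun n => Tu n / (INR n * G n)) 0.
Proof.
  intros HTu HGpos HGmono HS.
  apply is_lim_seq_spec in HS; apply is_lim_seq_spec; intros eps.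
  pose proof (cond_pos eps) as Heps.
  assert (Heps4 : 0 < eps / 4) by lra.
  destruct (HS (mkposreal _ Heps4)) as [M1 HM1]; simpl in HM1.
  set (M := Nat.max M1 (Nat.max N 1)).
  assert (HnG : forall n, (M <= n)%nat -> 0 < INR n * G n).
  { intros n Hn; apply Rmult_lt_0_compat; [apply lt_0_INR; lia | apply HGpos; lia]. }
  destruct (prefix_upper_bound Tu (2 * M)) as (A & HA0 & HA).
  assert (Hbound : forall n, (M <= n)%nat -> Tu n <= A + 2 * (eps / 4) * (INR n * G n)).
  { apply halving_rec_bound; try lra; try lia; auto.
    - intros m Hm; apply Rlt_le, HGpos; lia.
    - intros m n Hmn; apply HGmono; lia.
    - intros m Hm; pose proof (HM1 m ltac:(lia)) as HSm.
      rewrite Rminus_0_r in HSm; apply Rabs_lt_between in HSm as [_ HSm].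
      apply (Rlt_div_l _ _ _ (HnG m Hm)) in HSm; lra. }
  pose proof (HGpos M ltac:(lia)) as HGM.
  destruct (INR_unbounded (2 * A / (eps * G M))) as [Nb HNb].
  exists (Nat.max M Nb); intros n Hn.
  pose proof (HnG n ltac:(lia)); pose proof (Hbound n ltac:(lia)).
  assert (HAsmall : A < eps / 2 * (INR n * G n)).
  { assert (INR Nb <= INR n) by (apply le_INR; lia).
    apply Rlt_div_l in HNb; [| apply Rmult_lt_0_compat; lra].
    assert (G M <= G n) by (apply HGmono; lia).
    assert (INR Nb * G M <= INR n * G n)
      by (apply Rmult_le_compat; try lra; apply pos_INR).
    nra. }
  rewrite Rminus_0_r, Rabs_pos_eq
    by (apply Rmult_le_pos; [apply HTu; lia | apply Rlt_le, Rinv_0_lt_compat; lra]).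
  apply Rlt_div_l; lra.
Qed.

End HalvingRecursion.

Lemma polylog_mono (a b m n : nat) :
  (1 <= m <= n)%nat -> polylog a b m <= polylog a b n.
Proof.
  intros Hmn; unfold polylog.
  assert (1 <= INR m) by (apply (le_INR 1); lia).
  assert (INR m <= INR n) by (apply le_INR; lia).
  assert (0 <= ln (INR m)) by (rewrite <- ln_1; apply ln_le; lra).
  apply Rmult_le_compat; try (apply pow_le; lra).
  - apply pow_incr; lra.
  - apply pow_incr; split; [lra | apply ln_le; lra].
Qed.

Lemma polylog_ge1 (a b n : nat) : (3 <= n)%nat -> 1 <= polylog a b n.
Proof.
  intros Hn; unfold polylog.
  assert (3 <= INR n) by (apply (le_INR 3) in Hn; simpl in Hn; lra).
  assert (1 <= ln (INR n)).
  { rewrite <- (ln_exp 1); apply ln_le; [apply exp_pos | pose proof exp_le_3; lra]. }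
  rewrite <- (Rmult_1_l 1); apply Rmult_le_compat; try lra; apply pow_R1_Rle; lra.
Qed.

Lemma polylog_doubling (a b n : nat) : (1 <= n)%nat ->
  polylog a b n <= 2 ^ a * 2 ^ b * polylog a b (n / 2 + 1)%nat.
Proof.
  intros Hn; unfold polylog.
  set (x := INR (n / 2 + 1)).
  pose proof (half_bounds n) as [_ Hhalf].
  assert (Hx : x = INR (n / 2) + 1) by (unfold x; rewrite plus_INR; simpl; lra).
  assert (1 <= x) by (pose proof (pos_INR (n / 2)); lra).
  assert (1 <= INR n) by (apply (le_INR 1); lia).
  assert (Hlin : INR n <= 2 * x) by lra.
  assert (Hlog : ln (INR n) <= 2 * ln x).
  { replace (2 * ln x) with (ln (x ^ 2)) by (rewrite ln_pow by lra; simpl; lra).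
    apply ln_le; [lra|]. pose proof (pow2_ge_0 (x - 1)); simpl; nra. }
  assert (0 <= ln (INR n)) by (rewrite <- ln_1; apply ln_le; lra).
  replace (2 ^ a * 2 ^ b * (x ^ a * ln x ^ b)) with ((2 * x) ^ a * (2 * ln x) ^ b)
    by (rewrite !Rpow_mult_distr; ring).
  apply Rmult_le_compat; try (apply pow_le; lra); apply pow_incr; lra.
Qed.

Lemma n_polylog_pos (a b n : nat) : (3 <= n)%nat -> 0 < INR n * polylog a b n.
Proof.
  intros Hn; apply Rmult_lt_0_compat;
    [apply lt_0_INR; lia | pose proof (polylog_ge1 a b n Hn); lra].
Qed.

Lemma linear_recursion_polylog (Tb Tr : nat -> R) (a b : nat) :
  (forall n, (1 <= n)%nat -> 0 <= Tr n) ->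
  (forall n, (2 <= n)%nat -> Tr n = Tb n + Tr (n - 1)%nat) ->
  bigTheta Tb (polylog a b) -> bigTheta Tr (fun n => INR n * polylog a b n).
Proof.
  intros HTr Hrec HTb.
  apply (linear_recursion_theta Tb Tr) with 3%nat (2 ^ a * 2 ^ b);
    auto using polylog_mono, polylog_ge1, polylog_doubling.
  apply Rmult_lt_0_compat; apply pow_lt; lra.
Qed.

Lemma halving_recursion_polylog (S Tu : nat -> R) (a b : nat) :
  (forall n, (2 <= n)%nat -> Tu n = S n + Tu (n / 2)%nat) ->
  (forall n, (1 <= n)%nat -> 0 <= Tu n) ->
  is_lim_seq (fun n => S n / (INR n * polylog a b n)) 0 ->
  is_lim_seq (fun n => Tu n / (INR n * polylog a b n)) 0.
Proof.
  intros Hrec HTu.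
  apply (halving_recursion_negligible S Tu (polylog a b) Hrec 3); auto.
  - intros n Hn; pose proof (polylog_ge1 a b n Hn); lra.
  - intros m n Hmn; apply polylog_mono; lia.
Qed.

Theorem mainTheorem10 (Tb Tr S Tu : nat -> R)
  (hTb_pos : forall n : nat, (1 <= n)%nat -> 0 < Tb n)
  (hTr_pos : forall n : nat, (1 <= n)%nat -> 0 < Tr n)
  (hS_pos : forall n : nat, (1 <= n)%nat -> 0 < S n)
  (hTu_pos : forall n : nat, (1 <= n)%nat -> 0 < Tu n)
  (hTr_rec : forall n : nat, (2 <= n)%nat -> Tr n = Tb n + Tr (n - 1)%nat)
  (hTu_rec : forall n : nat, (2 <= n)%nat -> Tu n = S n + Tu (n / 2)%nat)
  (a b : nat) (hTb_theta : bigTheta Tb (polylog a b))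
  (c d : nat) (hS_theta : bigTheta S (polylog c d)) :
  is_lim_seq (fun n => Tu n / Tr n) 0 <->
  is_lim_seq (fun n => S n / (INR n * Tb n)) 0.
Proof.
  set (np := fun n => INR n * polylog a b n).
  assert (HTr : bigTheta Tr np).
  { apply linear_recursion_polylog with Tb; auto.
    intros n Hn; apply Rlt_le, hTr_pos, Hn. }
  assert (HnTb : bigTheta (fun n => INR n * Tb n) np)
    by (apply bigTheta_mul; auto using pos_INR).
  assert (HnTb_pos : forall n, (1 <= n)%nat -> 0 < INR n * Tb n)
    by (intros n Hn; apply Rmult_lt_0_compat; [apply lt_0_INR; lia | auto]).
  split.
  - (* S <= Tu by the halving recursion, and Tr = Theta(n Tb). *)
    apply (lim0_ratio_compare _ _ _ _
             (bigTheta_upper _ _ (bigTheta_trans _ _ _ HTr (bigTheta_sym _ _ HnTb)))).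
    exists 2%nat; intros n Hn.
    assert (Hhalf : (1 <= n / 2)%nat) by (apply Nat.div_le_lower_bound; lia).
    pose proof (hTu_rec n Hn); pose proof (hTu_pos _ Hhalf); pose proof (hS_pos n ltac:(lia)).
    split; [apply HnTb_pos; lia|]; split; [apply hTr_pos; lia | lra].
  - (* S/(n Tb) -> 0 gives S/(n p) -> 0, hence Tu/(n p) -> 0, hence Tu/Tr -> 0. *)
    intros HS.
    assert (HSnp : is_lim_seq (fun n => S n / np n) 0).
    { apply (lim0_ratio_compare S S np _ (bigTheta_upper _ _ HnTb)); [|exact HS].
      exists 3%nat; intros n Hn; pose proof (hS_pos n ltac:(lia)).
      split; [apply n_polylog_pos, Hn|]; split; [apply HnTb_pos; lia | lra]. }
    apply (lim0_ratio_compare Tu Tu Tr np (bigTheta_upper _ _ (bigTheta_sym _ _ HTr))).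
    + exists 3%nat; intros n Hn; pose proof (hTu_pos n ltac:(lia)).
      split; [apply hTr_pos; lia|]; split; [apply n_polylog_pos, Hn | lra].
    + apply (halving_recursion_polylog S Tu); auto.
      intros n Hn; apply Rlt_le, hTu_pos, Hn.
Qed.
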